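(* Let $d\ge1$ and for $k=1,2$ let $(\boldsymbol X_k,Y_k)=(X_{k,1},\ldots,X_{k,d},Y_k)$ be a random vector with continuous marginals and $(d+1)$-dimensional copula $C_k$. Fix $\boldsymbol{\alpha}\in[0,1)^d$ with $C_k(\boldsymbol\alpha,1)<1$ for $k=1,2$, and set $l_{\boldsymbol\alpha}(v)=\dfrac{v-C_1(\boldsymbol\alpha,v)}{v-C_2(\boldsymbol\alpha,v)}$. If $Y_1\le_{\rm st}Y_2$ and $l_{\boldsymbol\alpha}(v)\ge l_{\boldsymbol\alpha}(1)$ for all $v\in(0,1]$, then $$\mathrm{VCoVaR}_{\boldsymbol\alpha,\beta}(Y_1|\boldsymbol X_1)\le \mathrm{VCoVaR}_{\boldsymbol\alpha,\beta}(Y_2|\boldsymbol X_2)\quad\text{for all }\beta\in(0,1).$$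
   Context: $C(\boldsymbol{\alpha},v)=C(\alpha_1,\ldots,\alpha_d,v)$. For a distribution function $F$, $F^{-1}(t)=\inf\{x:F(x)\ge t\}$, $\mathrm{VaR}_t(Z)=F_Z^{-1}(t)$. $\mathrm{VCoVaR}_{\boldsymbol\alpha,\beta}(Y_k|\boldsymbol X_k)$ is the $\beta$-quantile of the conditional distribution of $Y_k$ given $\{\exists\, i: X_{k,i}>\mathrm{VaR}_{\alpha_i}(X_{k,i})\}$. $Y_1\le_{\rm st}Y_2$ (usual stochastic order) means $P(Y_1>x)\le P(Y_2>x)$ for all $x\in\mathbb{R}$. *)

From HB Require Import structures.
From mathcomp Require Import all_boot all_order all_algebra.
From mathcomp Require Import all_classical all_reals all_analysis.
Set Implicit Arguments. Unset Strict Implicit. Unset Printing Implicit Defensive.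
Import Order.TTheory GRing.Theory Num.Theory.
Import numFieldNormedType.Exports.
Local Open Scope classical_set_scope.
Local Open Scope ring_scope.

Section Defs.
Context {R : realType}.

(* generalized inverse F^{-1}(t) = inf {x : F x >= t}, valued in \bar R
   (so that e.g. F^{-1}(0) = -oo) *)
Definition ginv (F : R -> R) (t : R) : \bar R :=
  ereal_inf [set x%:E | x in [set x : R | t <= F x]].

Context {dT : measure_display} {T : measurableType dT}.

Definition cdf (P : probability T R) (Z : T -> R) (x : R) : R :=
  fine (P [set t | Z t <= x]).

Definition VaR (P : probability T R) (Z : T -> R) (t : R) : \bar R :=
  ginv (cdf P Z) t.

Definition VEvent {d : nat} (P : probability T R) (X : 'I_d -> T -> R)
  (alpha : 'I_d -> R) : set T :=
  [set t | exists i : 'I_d, (VaR P (X i) (alpha i) < (X i t)%:E)%E].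

Definition cond_cdf (P : probability T R) (A : set T) (Y : T -> R) (y : R) : R :=
  fine (P (A `&` [set t | Y t <= y])) / fine (P A).

Definition VCoVaR {d : nat} (P : probability T R) (X : 'I_d -> T -> R)
  (Y : T -> R) (alpha : 'I_d -> R) (beta : R) : \bar R :=
  ginv (cond_cdf P (VEvent P X alpha) Y) beta.

End Defs.

Section Copula.
Context {R : realType} {d : nat}.

(* A (d+1)-dimensional function written C(u, v) with u in [0,1]^d, v in [0,1] *)
Definition in01 (x : R) := 0 <= x <= 1.

Definition vertex (a b : 'I_d -> R) (S : {set 'I_d}) : 'I_d -> R :=
  fun i => if i \in S then b i else a i.

Definition cvolume (C : ('I_d -> R) -> R -> R) (a b : 'I_d -> R) (a' b' : R) : R :=
  \sum_(S : {set 'I_d})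
     (-1) ^+ #|~: S| * (C (vertex a b S) b' - C (vertex a b S) a').

Definition is_copula (C : ('I_d -> R) -> R -> R) : Prop :=
  [/\ (forall u v, (forall i, in01 (u i)) -> in01 v ->
         (exists i, u i = 0) \/ v = 0 -> C u v = 0),
      (forall v, in01 v -> C (fun _ => 1) v = v),
      (forall (j : 'I_d) (w : R), in01 w ->
         C (fun i => if i == j then w else 1) 1 = w) &
      (forall (a b : 'I_d -> R) (a' b' : R),
         (forall i, in01 (a i) /\ in01 (b i) /\ a i <= b i) ->
         in01 a' -> in01 b' -> a' <= b' -> 0 <= cvolume C a b a' b')].
End Copula.

Section RandomVector.
Context {R : realType} {dT : measure_display} {T : measurableType dT}.

Definition rv_cont_copula {d : nat} (P : probability T R)
  (X : 'I_d -> T -> R) (Y : T -> R) (C : ('I_d -> R) -> R -> R) : Prop :=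
  [/\ (forall i, measurable_fun setT (X i)) /\ measurable_fun setT Y,
      (forall i, continuous (cdf P (X i))),
      continuous (cdf P Y),
      is_copula C &
      (forall (x : 'I_d -> R) (y : R),
         P [set t | (forall i, X i t <= x i) /\ Y t <= y] =
         (C (fun i => cdf P (X i) (x i)) (cdf P Y y))%:E)].

End RandomVector.

Definition st_le {R : realType} {d1 d2 : measure_display}
  {T1 : measurableType d1} {T2 : measurableType d2}
  (P1 : probability T1 R) (Y1 : T1 -> R)
  (P2 : probability T2 R) (Y2 : T2 -> R) : Prop :=
  forall x : R, (P1 [set t | (x < Y1 t)%R] <= P2 [set t | (x < Y2 t)%R])%E.

From Pilot Require Import Defs.
From HB Require Import structures.
From mathcomp Require Import all_boot all_order all_algebra.
From mathcomp Require Import all_classical all_reals all_analysis.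
From mathcomp Require Import measurable_realfun lra.
Import Order.TTheory GRing.Theory Num.Theory.
Import numFieldNormedType.Exports.
Local Open Scope classical_set_scope.
Local Open Scope ring_scope.

(** Write [E] for the event {exists i, X_i > VaR_(alpha_i)(X_i)}. Its complement
    is {X <= VaR_alpha(X)}, so Sklar's representation gives
    P(E, Y <= y) = v - C(alpha, v) and P(E) = 1 - C(alpha, 1), with v = F_Y(y).
    A copula is nondecreasing and 1-Lipschitz in its last argument, hence so is
    v |-> v - C(alpha, v); together with F_(Y_2) <= F_(Y_1) and the hypothesis
    on l_alpha this makes the conditional distribution function of Y_1 given
    E dominate that of Y_2 pointwise, and a pointwise larger distribution
    function has smaller quantiles. *)

Lemma le_ginv (R : realType) (F G : R -> R) (t : R) :
  (forall x, G x <= F x) -> (ginv F t <= ginv G t)%E.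
Proof.
move=> GF; apply: ereal_inf_le_tmp => _ [x /= tG <-]; exists x => //=.
exact: le_trans tG (GF x).
Qed.

Section fine_probability.
Context {R : realType} {dT : measure_display} {T : measurableType dT}
  (P : probability T R).
Implicit Types A B : set T.

Lemma fine_probabilityK A : measurable A -> (fine (P A))%:E = P A.
Proof. by move=> mA; rewrite fineK// fin_num_measure. Qed.

Lemma fine_probability_ge0 A : 0 <= fine (P A).
Proof. exact/fine_ge0/measure_ge0. Qed.

Lemma fine_probability_le1 A : measurable A -> fine (P A) <= 1.
Proof. by move=> mA; rewrite -lee_fin fine_probabilityK// probability_le1. Qed.

Lemma le_fine_probability A B : measurable A -> measurable B -> A `<=` B ->
  fine (P A) <= fine (P B).
Proof.
move=> mA mB AB; rewrite -lee_fin !fine_probabilityK//.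
by apply: le_measure; rewrite ?inE.
Qed.

Lemma fine_probabilityDI {A B} : measurable A -> measurable B ->
  fine (P A) = fine (P (A `\` B)) + fine (P (A `&` B)).
Proof.
move=> mA mB; have mAB := measurableD mA mB; have mAIB := measurableI _ _ mA mB.
by apply/EFin_inj; rewrite EFinD !fine_probabilityK//; exact: measureDI.
Qed.

Lemma fine_probabilityC A : measurable A -> fine (P (~` A)) = 1 - fine (P A).
Proof.
move=> mA; apply/EFin_inj.
by rewrite EFinB !fine_probabilityK ?probability_setC//; exact: measurableC.
Qed.

End fine_probability.

Section cdf.
Context {R : realType} {dT : measure_display} {T : measurableType dT}
  (P : probability T R) {Y : T -> R}.

Lemma VaR0 : VaR P Y 0 = -oo%E.
Proof.
have VaR_le r : (VaR P Y 0 <= r%:E)%E.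
  by apply: ereal_inf_lbound; exists r => //; exact: fine_probability_ge0.
case: (VaR P Y 0) VaR_le => [r /(_ (r - 1))|/(_ 0)//|//].
by rewrite lee_fin => ?; exfalso; lra.
Qed.

Hypothesis mY : measurable_fun setT Y.

Lemma measurable_le_fun y : measurable [set t | Y t <= y].
Proof.
by rewrite -[X in measurable X]setTI -preimage_itvNyc; apply: mY => //; exact: measurable_itv.
Qed.

Lemma measurable_EFin_gt_fun (e : \bar R) : measurable [set t | (e < (Y t)%:E)%E].
Proof.
rewrite -[X in measurable X]setTI.
by apply: emeasurable_fun_o_infty => //; exact/measurable_EFinP.
Qed.

Lemma cdf_in01 y : in01 (Defs.cdf P Y y).
Proof.
by rewrite /in01 fine_probability_ge0 fine_probability_le1//; exact: measurable_le_fun.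
Qed.

Lemma le_cdf : {homo Defs.cdf P Y : x y / x <= y}.
Proof.
move=> x y xy; apply: le_fine_probability; try exact: measurable_le_fun.
by move=> t /= /le_trans; apply.
Qed.

Lemma probability_gt_cdf y : P [set t | y < Y t] = (1 - Defs.cdf P Y y)%:E.
Proof.
have -> : [set t | y < Y t] = ~` [set t | Y t <= y].
  by apply/seteqP; split => t /=; rewrite ltNge => /negP.
have mYy := measurable_le_fun y.
by rewrite -fine_probabilityC // fine_probabilityK //; exact: measurableC.
Qed.

Let Yrv : {RV P >-> R} := HB.pack Y (@isMeasurableFun.Build _ _ T R Y mY).

Let cdf_rvE x : fine (random_variable.cdf Yrv x) = Defs.cdf P Y x.
Proof.
rewrite /random_variable.cdf /distribution /= /pushforward /Defs.cdf.
by congr (fine (P _)); apply/seteqP; split => t /=; rewrite in_itv.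
Qed.

Lemma exists_cdf_lt {a} : 0 < a -> exists x, Defs.cdf P Y x < a.
Proof.
move=> a0; have /(cvgr_lt 0) : (fine \o random_variable.cdf Yrv) x @[x --> -oo] --> (0 : R).
  exact/fine_cvg/cvg_cdfNy0.
move=> /(_ a a0) [M [_ HM]]; exists (M - 1).
by rewrite -cdf_rvE; apply: (HM (M - 1)); rewrite ltrBlDr ltrDl.
Qed.

Lemma exists_cdf_gt {a} : a < 1 -> exists x, a < Defs.cdf P Y x.
Proof.
move=> a1; have /(cvgr_gt 1) : (fine \o random_variable.cdf Yrv) x @[x --> +oo] --> (1 : R).
  exact/fine_cvg/cvg_cdfy1.
move=> /(_ a a1) [M [_ HM]]; exists (M + 1).
by rewrite -cdf_rvE; apply: (HM (M + 1)); rewrite ltrDl.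
Qed.

Lemma VaR_continuous_cdf a : continuous (Defs.cdf P Y) -> 0 < a < 1 ->
  exists q, VaR P Y a = q%:E /\ Defs.cdf P Y q = a.
Proof.
set F := Defs.cdf P Y => cF /andP[a0 a1]; pose S := [set x | a <= F x].
have [x0 Fx0] := exists_cdf_lt a0.
have [x1 Fx1] := exists_cdf_gt a1.
have S0 : S !=set0 by exists x1; exact: ltW.
have x0S : lbound S x0.
  move=> x Sx; rewrite leNgt; apply/negP => /ltW/le_cdf Fxx0.
  by move: Sx; rewrite /S /= leNgt (le_lt_trans Fxx0 Fx0).
have Slb : has_lbound S by exists x0.
set q := inf S.
have qS : S q.
  have closedS : closed S.
    by apply: (@preimage_closed _ _ F [set x | a <= x]) => [x _|]; [exact: cF|exact: closed_ge].
  apply: (itv_closed_infimums S0 closedS).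
  by split; [exact: ge_inf | move=> x; exact: lb_le_inf].
have x0q : x0 <= q by exact: lb_le_inf.
have a_between : Num.min (F x0) (F q) <= a <= Num.max (F x0) (F q).
  by rewrite ge_min le_max (ltW Fx0) qS orbT.
have [c] := IVT x0q (continuous_subspaceT cF) a_between.
rewrite in_itv /= => /andP[_ cq] Fc.
have qc : q <= c by apply: (ge_inf Slb); rewrite /S /= Fc.
exists q; split; first by rewrite /VaR /ginv ereal_inf_EFin.
by rewrite -Fc (@le_anti _ _ c q) ?cq ?qc.
Qed.

End cdf.

Lemma exists_notin_neq {T : finType} {j : T} {S : {set T}} :
  S != [set: T]%SET -> S != [set~ j]%SET -> exists2 i, i != j & i \notin S.
Proof.
move=> /eqP ST /eqP Sj.
have [i /andP[ij iS]|noi] := pickP [pred i | (i != j) && (i \notin S)].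
  by exists i.
have inS i : i != j -> i \in S by move=> ij; move: (noi i) => /=; rewrite ij => /negbFE.
exfalso; case: (boolP (j \in S)) => jS; [apply: ST|apply: Sj]; apply/setP => i; rewrite !inE.
  by have [->//|/inS] := eqVneq i j.
by have [->|ij] := eqVneq i j; [rewrite (negbTE jS)|rewrite inS].
Qed.

Lemma in01_0 {R : realType} : in01 (0 : R).
Proof. by rewrite /in01 lexx ler01. Qed.

Lemma in01_1 {R : realType} : in01 (1 : R).
Proof. by rewrite /in01 ler01 lexx. Qed.

Lemma in01W {R : realType} {x : R} : 0 <= x < 1 -> in01 x.
Proof. by case/andP=> x0 x1; rewrite /in01 x0 ltW. Qed.

Section copula.
Context {R : realType} {d : nat} {C : ('I_d -> R) -> R -> R}.
Hypothesis copC : is_copula C.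
Implicit Types u : 'I_d -> R.

Definition set_coord u (j : 'I_d) (s : R) : 'I_d -> R :=
  fun i => if i == j then s else u i.

Lemma copula_last0 {u} : (forall i, in01 (u i)) -> C u 0 = 0.
Proof. by case: copC => grounded _ _ _ u01; apply: grounded => //; [exact: in01_0|right]. Qed.

(** Only two vertices of the box [(0,..,s,..,0), (u_1,..,t,..,u_d)] x [v1, v2]
    avoid a zero coordinate, so its C-volume is the difference of the two
    increments below. *)
Lemma copula_incr_set_coord {u} j {s t v1 v2} :
  (forall i, in01 (u i)) -> 0 <= s -> s <= t -> t <= 1 ->
  in01 v1 -> in01 v2 -> v1 <= v2 ->
  C (set_coord u j s) v2 - C (set_coord u j s) v1 <=
  C (set_coord u j t) v2 - C (set_coord u j t) v1.
Proof.
case: copC => grounded _ _ vol u01 s0 st t1 v01 v02 v12.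
pose a := set_coord (fun=> 0) j s; pose b := set_coord u j t.
have ab i : in01 (a i) /\ in01 (b i) /\ a i <= b i.
  rewrite /a /b /set_coord /in01; case: (i == j).
    by rewrite s0 t1 (le_trans s0 st) (le_trans st t1).
  by have /andP[-> ->] := u01 i; rewrite lexx ler01.
have vertex0 S : S != [set: 'I_d]%SET -> S != [set~ j]%SET ->
    C (vertex a b S) v2 - C (vertex a b S) v1 = 0.
  move=> ST Sj; have [i ij iS] := exists_notin_neq ST Sj.
  have vS k : in01 (vertex a b S k).
    by rewrite /vertex; case: (k \in S); have [? []] := ab k.
  have ex0 : exists i, vertex a b S i = 0.
    by exists i; rewrite /vertex (negbTE iS) /a /set_coord (negbTE ij).
  by rewrite !(grounded _ _ vS _ (or_introl ex0)) ?subrr.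
have := vol a b v1 v2 ab v01 v02 v12.
rewrite /cvolume (bigD1 [set: 'I_d]%SET) //= (bigD1 [set~ j]%SET) /=; last first.
  by apply/eqP => /setP /(_ j); rewrite !inE eqxx.
rewrite big1 => [|S /andP[ST Sj]]; last by rewrite vertex0 ?mulr0.
have -> : vertex a b [set: 'I_d]%SET = set_coord u j t by apply/funext => k; rewrite /vertex inE.
have -> : vertex a b [set~ j]%SET = set_coord u j s.
  by apply/funext => k; rewrite /vertex !inE /a /b /set_coord; case: (k == j).
by rewrite finset.setCT cards0 expr0 mul1r finset.setCK cards1 expr1 addr0 mulN1r subr_ge0.
Qed.

(** Raise the coordinates of [u] to 1 one at a time; the increment only grows,
    and at [u = 1] it equals [v2 - v1] by the uniform margin. *)
Lemma copula_lipschitz_last {u v1 v2} :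
  (forall i, in01 (u i)) -> in01 v1 -> in01 v2 -> v1 <= v2 ->
  C u v2 - C u v1 <= v2 - v1.
Proof.
move=> u01 v01 v02 v12.
pose w k := fun i : 'I_d => if (i < k)%N then 1 else u i.
have w01 k i : in01 (w k i).
  by rewrite /w; case: ifP => // _; exact: in01_1.
have incr_w k : C u v2 - C u v1 <= C (w k) v2 - C (w k) v1.
  elim: k => [|k IH]; first by have -> : w 0%N = u by apply/funext.
  apply: le_trans IH _; have [kd|dk] := ltnP k d; last first.
    suff -> : w k.+1 = w k by [].
    apply/funext => i; rewrite /w.
    by rewrite (leq_trans (ltn_ord i) dk) (leq_trans (ltn_ord i) (leqW dk)).
  pose j := Ordinal kd.
  have -> : w k = set_coord (w k) j (u j).
    by apply/funext => i; rewrite /set_coord /w; case: eqP => // ->; rewrite ltnn.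
  have -> : w k.+1 = set_coord (w k) j 1.
    apply/funext => i; rewrite /set_coord /w ltnS leq_eqVlt.
    case: (eqVneq i j) => [->|ij]; first by rewrite /= eqxx.
    have ik : (i : nat) != k by apply: contra_neq ij => ik; apply: val_inj.
    by rewrite (negbTE ik).
  have /andP[uj0 uj1] := u01 j.
  exact: copula_incr_set_coord (w01 k) uj0 uj1 (lexx 1) v01 v02 v12.
have := incr_w d; have -> : w d = (fun _ => 1) by apply/funext => i; rewrite /w ltn_ord.
by case: copC => _ margin _ _; rewrite !margin.
Qed.

Lemma copula_le_last {u v} : (forall i, in01 (u i)) -> in01 v -> C u v <= v.
Proof.
move=> u01 v01; have /andP[v0 _] := v01.
by have := copula_lipschitz_last u01 in01_0 v01 v0; rewrite copula_last0 // !subr0.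
Qed.

Lemma copula_homo_last {u v1 v2} : (0 < d)%N ->
  (forall i, in01 (u i)) -> in01 v1 -> in01 v2 -> v1 <= v2 -> C u v1 <= C u v2.
Proof.
move=> d_gt0 u01 v01 v02 v12; pose j := Ordinal d_gt0.
have Eu : u = set_coord u j (u j).
  by apply/funext => i; rewrite /set_coord; case: eqP => // ->.
have u0_01 i : in01 (set_coord u j 0 i).
  by rewrite /set_coord; case: eqP => // _; exact: in01_0.
have /andP[uj0 uj1] := u01 j.
have u0_0 : exists i, set_coord u j 0 i = 0 by exists j; rewrite /set_coord eqxx.
have := copula_incr_set_coord j u01 (lexx 0) uj0 uj1 v01 v02 v12.
case: copC => grounded _ _ _.
by rewrite -Eu !(grounded _ _ u0_01 _ (or_introl u0_0)) // subrr subr_ge0.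
Qed.

End copula.

(** The distribution function of F_Y(Y) given {exists i, U_i > alpha_i}, where
    (U, F_Y(Y)) has copula [C]. *)
Definition cond_copula {R : realType} {d : nat} (C : ('I_d -> R) -> R -> R)
  (alpha : 'I_d -> R) (v : R) : R :=
  (v - C alpha v) / (1 - C alpha 1).

Lemma cond_copula_le {R : realType} {d : nat} (C1 C2 : ('I_d -> R) -> R -> R)
  (alpha : 'I_d -> R) (w z : R) :
  is_copula C1 -> is_copula C2 -> (forall i, in01 (alpha i)) ->
  C1 alpha 1 < 1 -> C2 alpha 1 < 1 ->
  (forall v : R, 0 < v <= 1 ->
     (v - C1 alpha v) / (v - C2 alpha v) >= (1 - C1 alpha 1) / (1 - C2 alpha 1)) ->
  in01 w -> in01 z -> w <= z ->
  cond_copula C2 alpha w <= cond_copula C1 alpha z.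
Proof.
move=> cop1 cop2 a01 C1lt1 C2lt1 hl w01 z01 wz; rewrite /cond_copula.
set c1 := 1 - C1 alpha 1; set c2 := 1 - C2 alpha 1.
have c1_gt0 : 0 < c1 by rewrite subr_gt0.
have c2_gt0 : 0 < c2 by rewrite subr_gt0.
have D1_ge0 : 0 <= w - C1 alpha w by rewrite subr_ge0 copula_le_last.
have D2_ge0 : 0 <= w - C2 alpha w by rewrite subr_ge0 copula_le_last.
apply: (@le_trans _ _ ((w - C1 alpha w) / c1)); last first.
  rewrite ler_pM2r ?invr_gt0 //.
  by have := copula_lipschitz_last cop1 a01 w01 z01 wz; lra.
have [->|D2_neq0] := eqVneq (w - C2 alpha w) 0.
  by rewrite mul0r; apply: divr_ge0 => //; exact: ltW.
have w_gt0 : 0 < w.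
  have /andP[w_ge0 _] := w01; rewrite lt_neqAle w_ge0 andbT; apply/eqP => w0.
  by move: D2_neq0; rewrite -w0 copula_last0 ?subrr ?eqxx.
have D2_gt0 : 0 < w - C2 alpha w by rewrite lt_neqAle eq_sym D2_neq0.
have w_le1 : w <= 1 by case/andP: w01.
have := hl w; rewrite w_gt0 w_le1 -/c1 -/c2 ler_pdivlMr // => /(_ isT) l_ge.
by rewrite ler_pdivlMr // mulrC mulrA mulrAC.
Qed.

Section vevent.
Context {R : realType} {dT : measure_display} {T : measurableType dT}
  {P : probability T R} {d : nat} {X : 'I_d -> T -> R} {Y : T -> R}
  {C : ('I_d -> R) -> R -> R} {alpha : 'I_d -> R}.
Hypothesis XYC : rv_cont_copula P X Y C.
Hypothesis alpha01 : forall i, 0 <= alpha i < 1.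

Let A := VEvent P X alpha.
Let G := Defs.cdf P Y.

Let mY : measurable_fun setT Y. Proof. by case: XYC => [[]]. Qed.

Let in01_alpha i : in01 (alpha i) := in01W (alpha01 i).

Lemma measurable_VEvent : measurable A.
Proof.
case: XYC => [[mX _] _ _ _ _].
have -> : A = \bigcup_(i in [set: 'I_d]) [set t | (VaR P (X i) (alpha i) < (X i t)%:E)%E].
  by apply/seteqP; split => t /= [i]; [exists i | move=> _ h; exists i].
apply: fin_bigcup_measurable; first exact: finite_finset.
by move=> i _; exact: measurable_EFin_gt_fun.
Qed.

Lemma fine_probability_VEventC_le y :
  fine (P (~` A `&` [set t | Y t <= y])) = C alpha (G y).
Proof.
case: XYC => [[mX _] cX _ [grounded _ _ _] sklar].
have [[i ai]|alpha_gt0] := pselect (exists i, alpha i = 0).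
  have -> : ~` A `&` [set t | Y t <= y] = set0.
    apply/seteqP; split => t //= [+ _]; apply; exists i.
    by rewrite ai VaR0 ltNyr.
  by rewrite measure0 grounded //; [exact: cdf_in01 | left; exists i].
have VaR_fin i : exists q, VaR P (X i) (alpha i) = q%:E /\ Defs.cdf P (X i) q = alpha i.
  apply: VaR_continuous_cdf => //; have /andP[a0 ->] := alpha01 i; rewrite andbT.
  by rewrite lt_neqAle a0 andbT eq_sym; apply/eqP => ai; apply: alpha_gt0; exists i.
have [q qE] := choice VaR_fin.
have -> : ~` A `&` [set t | Y t <= y] = [set t | (forall i, X i t <= q i) /\ Y t <= y].
  apply/seteqP; split => t /= [Xt Yt]; split => //.
    by move=> i; rewrite leNgt -lte_fin -(qE i).1; apply/negP => ?; apply: Xt; exists i.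
  by move=> [i]; rewrite (qE i).1 lte_fin ltNge Xt.
by rewrite sklar /=; congr (C _ _); apply/funext => i; rewrite (qE i).2.
Qed.

Lemma fine_probability_VEvent_le y :
  fine (P (A `&` [set t | Y t <= y])) = G y - C alpha (G y).
Proof.
have := fine_probabilityDI P (measurable_le_fun mY y) (measurableC measurable_VEvent).
rewrite setDE setCK setIC (setIC _ (~` A)) fine_probability_VEventC_le => PYy.
have : G y = fine (P (A `&` [set t | Y t <= y])) + C alpha (G y) := PYy.
lra.
Qed.

Hypothesis d_gt0 : (0 < d)%N.

Lemma fine_probability_VEvent : fine (P A) = 1 - C alpha 1.
Proof.
have cop : is_copula C by case: XYC.
have mAC := measurableC measurable_VEvent.
rewrite -[A]setCK fine_probabilityC //; congr (1 - _).
have sandwichP y : C alpha (G y) <= fine (P (~` A)) <= C alpha (G y) + (1 - G y).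
  have mYy := measurable_le_fun mY y.
  have tail : fine (P (~` A `\` [set t | Y t <= y])) <= 1 - G y.
    rewrite /G /Defs.cdf -fine_probabilityC //.
    by apply: le_fine_probability => [||t []]; [exact: measurableD|exact: measurableC|].
  have := fine_probability_ge0 P (~` A `\` [set t | Y t <= y]).
  rewrite (fine_probabilityDI P mAC mYy) fine_probability_VEventC_le.
  by move=> ?; apply/andP; split; lra.
have sandwichC y : C alpha (G y) <= C alpha 1 <= C alpha (G y) + (1 - G y).
  have Gy01 := cdf_in01 P mY y; have /andP[_ Gy1] := Gy01.
  have C_mono := copula_homo_last cop d_gt0 in01_alpha Gy01 in01_1 Gy1.
  have C_lip := copula_lipschitz_last cop in01_alpha Gy01 in01_1 Gy1.
  by rewrite /G; apply/andP; split; lra.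
have close e : 0 < e -> exists y, 1 - G y < e.
  move=> e0; have [|y Gy] := exists_cdf_gt P mY (a := 1 - e); first lra.
  by exists y; rewrite /G; lra.
apply/le_anti/andP; split; apply/ler_addgt0Pr => e /close [y Gy];
  case/andP: (sandwichP y) => ? ?; case/andP: (sandwichC y) => ? ?; lra.
Qed.

Lemma cond_cdf_VEvent y : cond_cdf P A Y y = cond_copula C alpha (G y).
Proof. by rewrite /cond_cdf fine_probability_VEvent fine_probability_VEvent_le. Qed.

End vevent.

Lemma st_le_cdf (R : realType) (d1 d2 : measure_display)
  (T1 : measurableType d1) (T2 : measurableType d2)
  (P1 : probability T1 R) (Y1 : T1 -> R) (P2 : probability T2 R) (Y2 : T2 -> R) :
  measurable_fun setT Y1 -> measurable_fun setT Y2 ->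
  st_le P1 Y1 P2 Y2 -> forall y, Defs.cdf P2 Y2 y <= Defs.cdf P1 Y1 y.
Proof.
by move=> mY1 mY2 st y; have := st y; rewrite !probability_gt_cdf // lee_fin lerD2l lerN2.
Qed.

Theorem theorem4p1 (R : realType) (d : nat) (hd : (0 < d)%N)
  (d1 : measure_display) (T1 : measurableType d1) (P1 : probability T1 R)
  (X1 : 'I_d -> T1 -> R) (Y1 : T1 -> R) (C1 : ('I_d -> R) -> R -> R)
  (d2 : measure_display) (T2 : measurableType d2) (P2 : probability T2 R)
  (X2 : 'I_d -> T2 -> R) (Y2 : T2 -> R) (C2 : ('I_d -> R) -> R -> R)
  (alpha : 'I_d -> R) :
  rv_cont_copula P1 X1 Y1 C1 ->
  rv_cont_copula P2 X2 Y2 C2 ->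
  (forall i, 0 <= alpha i < 1) ->
  C1 alpha 1 < 1 -> C2 alpha 1 < 1 ->
  st_le P1 Y1 P2 Y2 ->
  (forall v : R, 0 < v <= 1 ->
     (v - C1 alpha v) / (v - C2 alpha v) >= (1 - C1 alpha 1) / (1 - C2 alpha 1)) ->
  forall beta : R, 0 < beta < 1 ->
    (VCoVaR P1 X1 Y1 alpha beta <= VCoVaR P2 X2 Y2 alpha beta)%E.
Proof.
move=> XYC1 XYC2 alpha01 C1lt1 C2lt1 st hl beta _.
have [[_ mY1] _ _ cop1 _] := XYC1.
have [[_ mY2] _ _ cop2 _] := XYC2.
apply: le_ginv => y.
rewrite (cond_cdf_VEvent XYC1 alpha01 hd) (cond_cdf_VEvent XYC2 alpha01 hd).
apply: cond_copula_le => //; [exact: (fun i => in01W (alpha01 i))|exact: cdf_in01|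
  exact: cdf_in01|exact: st_le_cdf].
Qed.
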